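(* Let $q$ be a prime power, let $m,n$ be positive integers and let $\mathcal{C}_2 \subsetneqq \mathcal{C}_1 \subseteq \mathbb{F}_q^{m \times n}$ be $\mathbb{F}_q$-linear codes, with $\ell = \dim(\mathcal{C}_1) - \dim(\mathcal{C}_2)$. Encode a message as follows: fix a subspace $\mathcal{W}$ with $\mathcal{C}_1 = \mathcal{C}_2 \oplus \mathcal{W}$ and an $\mathbb{F}_q$-linear isomorphism $\psi : \mathbb{F}_q^\ell \to \mathcal{W}$; the message $\mathbf{x}$ is uniformly distributed on $\mathbb{F}_q^\ell$ and is encoded as $C = \psi(\mathbf{x}) + D$, where $D$ is uniformly distributed on $\mathcal{C}_2$ and independent of $\mathbf{x}$. An adversary wire-tapping $\mu$ links observes $CB^T \in \mathbb{F}_q^{m \times \mu}$ for some matrix $B \in \mathbb{F}_q^{\mu \times n}$. Mutual information $I(\cdot;\cdot)$ is computed with logarithms to base $q$. Then: (1) for every integer $1 \leq r \leq \ell$, $d_{M,r}(\mathcal{C}_2^\perp, \mathcal{C}_1^\perp) = \min\{\mu \geq 0 \mid \exists B \in \mathbb{F}_q^{\mu \times n} \text{ with } I(\mathbf{x}; CB^T) \geq r\}$; (2) for every integer $0 \leq \mu \leq n$, $K_{M,\mu}(\mathcal{C}_2^\perp, \mathcal{C}_1^\perp) = \max\{ I(\mathbf{x}; CB^T) \mid B \in \mathbb{F}_q^{\mu' \times n},\ 0 \leq \mu' \leq \mu\}$ (where for $\mu' = 0$ the observation is trivial and gives zero information); (3) $t = d_R(\mathcal{C}_2^\perp, \mathcal{C}_1^\perp)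 - 1$ is the largest integer $\mu$ such that $I(\mathbf{x}; CB^T) = 0$ for every $B \in \mathbb{F}_q^{\mu \times n}$.
   Context: For $C \in \mathbb{F}_q^{m\times n}$, ${\rm Row}(C) \subseteq \mathbb{F}_q^n$ is its row space and ${\rm Rk}(C) = \dim {\rm Row}(C)$. For a subspace $\mathcal{L} \subseteq \mathbb{F}_q^n$, the rank support space is $\mathcal{V}_\mathcal{L} = \{V \in \mathbb{F}_q^{m \times n} \mid {\rm Row}(V) \subseteq \mathcal{L}\}$. For nested linear codes $\mathcal{D}_2 \subsetneqq \mathcal{D}_1 \subseteq \mathbb{F}_q^{m\times n}$ and $1 \le r \le \dim \mathcal{D}_1 - \dim \mathcal{D}_2$, the $r$-th relative generalized matrix weight is $d_{M,r}(\mathcal{D}_1,\mathcal{D}_2) = \min\{\dim \mathcal{L} \mid \mathcal{L} \subseteq \mathbb{F}_q^n \text{ subspace}, \dim(\mathcal{D}_1 \cap \mathcal{V}_\mathcal{L}) - \dim(\mathcal{D}_2 \cap \mathcal{V}_\mathcal{L}) \geq r\}$; for $0 \le \mu \le n$ the relative dimension/rank support profile is $K_{M,\mu}(\mathcal{D}_1,\mathcal{D}_2) = \max\{\dim(\mathcal{D}_1 \cap \mathcal{V}_\mathcal{L}) - \dim(\mathcal{D}_2 \cap \mathcal{V}_\mathcal{L}) \mid \mathcal{L} \subseteq \mathbb{F}_q^n, \dim \mathcal{L} \le \mu\}$; and $d_R(\mathcal{D}_1,\mathcal{D}_2) = \min\{{\rm Rk}(C) \mid C \in \mathcal{D}_1,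 C \notin \mathcal{D}_2\}$. The dual of a linear code $\mathcal{C} \subseteq \mathbb{F}_q^{m \times n}$ is $\mathcal{C}^\perp = \{D \mid {\rm Trace}(CD^T) = 0 \ \forall C \in \mathcal{C}\}$; note $\mathcal{C}_1^\perp \subsetneqq \mathcal{C}_2^\perp$. *)

From HB Require Import structures.
From mathcomp Require Import all_boot all_order all_algebra.
From mathcomp Require Import all_classical all_reals all_analysis.

Set Implicit Arguments.
Unset Strict Implicit.
Unset Printing Implicit Defensive.

Import Order.TTheory GRing.Theory Num.Theory.
Local Open Scope ring_scope.

Section Info.
Variable R : realType.
Variable T : finType.
Variable Omega : {set T}.

Definition uprob (E : pred T) : R :=
  (#|[set w in Omega | E w]|)%:R / (#|Omega|)%:R.

Definition mutinfo (A B : finType) (X : T -> A) (Y : T -> B) (b : R) : R :=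
  \sum_(a : A) \sum_(y : B)
    let pab := uprob [pred w | (X w == a) && (Y w == y)] in
    let pa := uprob [pred w | X w == a] in
    let pb := uprob [pred w | Y w == y] in
    if pab == 0 then 0 else pab * (ln (pab / (pa * pb)) / ln b).
End Info.

Section Codes.
Variable F : finFieldType.
Variables m n : nat.

Definition dual_code (C : {vspace 'M[F]_(m, n)}) : {vspace 'M[F]_(m, n)} :=
  <<[seq D <- enum 'M[F]_(m, n) |
       [forall C0 : 'M[F]_(m, n), (C0 \in C) ==> (\tr (C0 *m D^T) == 0%R)]]>>%VS.

(* A subspace L of F^n is represented as the row space of a matrix
   A : 'M_n (every subspace arises so); dim L = \rank A.
   Rank support space V_L = { V | Row(V) \subseteq L }. *)
Definition rk_supp (A : 'M[F]_n) : {vspace 'M[F]_(m, n)} :=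
  <<[seq V <- enum 'M[F]_(m, n) | (V <= A)%MS]>>%VS.

Definition reldim (D1 D2 : {vspace 'M[F]_(m, n)}) (A : 'M[F]_n) : nat :=
  (\dim (D1 :&: rk_supp A) - \dim (D2 :&: rk_supp A))%N.

(* r-th relative generalized matrix weight d_{M,r}(D1,D2)
   (the set is non-empty whenever 1 <= r <= dim D1 - dim D2) *)
Definition dMr (D1 D2 : {vspace 'M[F]_(m, n)}) (r : nat) : nat :=
  \big[minn/n]_(A : 'M[F]_n | (r <= reldim D1 D2 A)%N) \rank A.

Definition KMmu (D1 D2 : {vspace 'M[F]_(m, n)}) (mu : nat) : nat :=
  \max_(A : 'M[F]_n | (\rank A <= mu)%N) reldim D1 D2 A.

(* relative minimum rank distance d_R(D1,D2)
   (non-empty set whenever D2 is strictly contained in D1) *)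
Definition dR (D1 D2 : {vspace 'M[F]_(m, n)}) : nat :=
  \big[minn/n]_(C : 'M[F]_(m, n) | (C \in D1) && (C \notin D2)) \rank C.

(* The wiretap scheme: sample space of pairs (x, D) with x in F^l and
   D in C2, uniform on it (i.e. x uniform, D uniform on C2, independent). *)
Definition wt_space (l : nat) (C2 : {vspace 'M[F]_(m, n)}) :
  {set 'rV[F]_l * 'M[F]_(m, n)} := [set w | w.2 \in C2].

Definition wt_info (R : realType) (l : nat) (C2 : {vspace 'M[F]_(m, n)})
  (psi : 'rV[F]_l -> 'M[F]_(m, n)) (mu : nat) (B : 'M[F]_(mu, n)) : R :=
  mutinfo (wt_space l C2) (fun w => w.1)
    (fun w => (psi w.1 + w.2) *m B^T) (#|F|)%:R.
End Codes.

From HB Require Import structures.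
From mathcomp Require Import all_boot all_order all_algebra.
From mathcomp Require Import all_classical all_reals all_analysis.
From mathcomp Require Import all_field.
From mathcomp Require Import zify ring.

Set Implicit Arguments.
Unset Strict Implicit.
Unset Printing Implicit Defensive.

Import Order.TTheory GRing.Theory Num.Theory.
Local Open Scope ring_scope.

(* Let f be the linear map C |-> C B^T and c = dim f(C1) - dim f(C2).
   Information side: (x, D) |-> psi(x) + D is a bijection onto C1, and every
   nonempty fibre of the observation (jointly with x or not) is a coset of the
   kernel of f restricted to C2 or C1; hence every nonzero term of I(x; C B^T)
   is p log_q q^c, and I(x; C B^T) = c.
   Code side: the matrices with rows in Row(B) are the Y B, and
   C^perp /\ V_Row(B) is the image of f(C)^perp under Y |-> Y B, so the
   relative dimension of (C2^perp, C1^perp) on V_Row(B) is also c.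
   Since every subspace of F_q^n of dimension k is Row(B) for a B with any
   number mu >= k of rows, d_M,r, K_M,mu and d_R become the stated extrema. *)

Section RankMetricSpaces.
Variable F : finFieldType.

Lemma mem_span_filter p q (P : pred 'M[F]_(p, q)) :
  P 0 -> (forall a u v, P u -> P v -> P (a *: u + v)) ->
  forall x, (x \in <<[seq V <- enum 'M[F]_(p, q) | P V]>>%VS) = P x.
Proof.
move=> P0 Plin x; apply/idP/idP => [xs|Px]; last first.
  by apply: memv_span; rewrite mem_filter Px mem_enum.
rewrite (coord_span (X := in_tuple _) xs).
apply: (big_ind P) => // [u v Pu Pv|i _]; first by rewrite -(scale1r u) Plin.
rewrite -[_ *: _]addr0; apply: Plin => //.
have : (in_tuple [seq V <- enum 'M[F]_(p, q) | P V])`_i \in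
   [seq V <- enum 'M[F]_(p, q) | P V] by apply: mem_nth.
by rewrite mem_filter => /andP[].
Qed.

Lemma mem_rk_supp m n (A : 'M[F]_n) (V : 'M[F]_(m, n)) :
  (V \in rk_supp m A) = (V <= A)%MS.
Proof.
rewrite mem_span_filter ?sub0mx // => a u v Hu Hv.
by rewrite addmx_sub // scalemx_sub.
Qed.

Lemma mem_dual_codeP m n (C : {vspace 'M[F]_(m, n)}) D :
  reflect (forall C0, C0 \in C -> \tr (C0 *m D^T) = 0) (D \in dual_code C).
Proof.
rewrite mem_span_filter.
- by apply: (iffP forall_inP) => H C0 /H /eqP.
- by apply/forall_inP => C0 _; rewrite trmx0 mulmx0 mxtrace0.
move=> a u v /forall_inP Hu /forall_inP Hv; apply/forall_inP => C0 C0C.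
by rewrite linearD linearZ /= mulmxDr -scalemxAr mxtraceD mxtraceZ
  (eqP (Hu _ C0C)) (eqP (Hv _ C0C)) mulr0 addr0.
Qed.

Lemma dual_codeS m n (C C' : {vspace 'M[F]_(m, n)}) :
  (C <= C')%VS -> (dual_code C' <= dual_code C)%VS.
Proof.
move=> CC'; apply/subvP => D /mem_dual_codeP HD.
by apply/mem_dual_codeP => C0 /(subvP CC'); apply: HD.
Qed.

Lemma mxtrace_mul_tr_mxvec p q (C D : 'M[F]_(p, q)) :
  \tr (C *m D^T) = (mxvec C *m (mxvec D)^T) 0 0.
Proof.
transitivity (\sum_(ij : 'I_p * 'I_q) C ij.1 ij.2 * D ij.1 ij.2).
  rewrite /mxtrace -(pair_bigA _ (fun i j => C i j * D i j)) /=.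
  by apply: eq_bigr => i _; rewrite !mxE; apply: eq_bigr => j _; rewrite !mxE.
rewrite mxE (reindex _ (curry_mxvec_bij _ _)) /=.
by apply: eq_bigr => -[i j] _; rewrite /= !mxE !mxvecE.
Qed.

Lemma dim_dual_code p q (S : {vspace 'M[F]_(p, q)}) :
  (\dim (dual_code S) + \dim S = p * q)%N.
Proof.
set k := \dim S; set b := vbasis S.
pose P : 'M[F]_(k, p * q) := \matrix_(i < k) mxvec b`_i.
pose h : 'Hom('M[F]_(p, q), 'rV[F]_k) := linfun (mulmxr P^T \o mxvec).
have hE D i : h D 0 i = \tr (b`_i *m D^T).
  rewrite lfunE mxtrace_mul_tr_mxvec !mxE.
  by apply: eq_bigr => a _; rewrite !mxE mulrC.
have kerh : lker h = dual_code S.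
  apply/vspaceP => D; rewrite memv_ker; apply/eqP/mem_dual_codeP => [h0 C0 C0S|H].
    rewrite (coord_vbasis C0S) mulmx_suml linear_sum big1 // => i _.
    by rewrite -scalemxAl linearZ /= -hE h0 mxE mulr0.
  apply/rowP => i; rewrite hE mxE; apply: H.
  by apply: vbasis_mem; apply: mem_nth; rewrite size_tuple.
have P_free : row_free P.
  rewrite -kermx_eq0 -submx0; apply/rV_subP => u /sub_kermxP uP0.
  rewrite submx0; apply/eqP/rowP => j; rewrite mxE.
  have freeb : free b := basis_free (vbasisP S).
  rewrite -(coord_sum_free (fun i => u 0 i) j freeb).
  suff -> : \sum_(i < k) u 0 i *: b`_i = 0 by rewrite linear0.
  rewrite mulmx_sum_row in uP0; apply/eqP; rewrite -mxvec_eq0 linear_sum /=.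
  by apply/eqP; rewrite -[RHS]uP0; apply: eq_bigr => i _; rewrite linearZ /= rowK.
have imh : limg h = fullv.
  apply/vspaceP => v; rewrite memvf.
  have /submxP[u ->] : (v <= P^T)%MS by apply: submx_full; rewrite /row_full mxrank_tr.
  have -> : u *m P^T = h (vec_mx u) by rewrite lfunE /= vec_mxK.
  by rewrite memv_img ?memvf.
by have := limg_ker_dim h fullv; rewrite capfv kerh imh !dimvf /dim /= mul1n.
Qed.

Lemma dim_dual_codeB p q (S S' : {vspace 'M[F]_(p, q)}) :
  (\dim (dual_code S) - \dim (dual_code S') = \dim S' - \dim S)%N.
Proof. by have := dim_dual_code S; have := dim_dual_code S'; lia. Qed.

End RankMetricSpaces.

Section Reduction.
Variables (F : finFieldType) (m n mu : nat) (B : 'M[F]_(mu, n)).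

Definition mulmxr_lfun p q r (A : 'M[F]_(q, r)) : 'Hom('M[F]_(p, q), 'M[F]_(p, r)) :=
  linfun (mulmxr A).

Lemma mulmxr_lfunE p q r (A : 'M[F]_(q, r)) X : mulmxr_lfun p A X = X *m A.
Proof. by rewrite lfunE. Qed.

Local Notation f := (mulmxr_lfun m B^T).
Local Notation g := (mulmxr_lfun m B).

(* Matrices with rows in Row(B) are exactly the Y B, and Tr(C (Y B)^T) = Tr((C B^T) Y^T). *)
Lemma dual_code_cap_rk_supp (C : {vspace 'M[F]_(m, n)}) :
  (dual_code C :&: rk_supp m <<B>>%MS)%VS = (g @: dual_code (f @: C))%VS.
Proof.
apply/vspaceP => D; rewrite memv_cap mem_rk_supp genmxE.
apply/andP/memv_imgP => [[/mem_dual_codeP DC /submxP[Y DY]]|].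
  exists Y; last by rewrite mulmxr_lfunE DY.
  apply/mem_dual_codeP => _ /memv_imgP[C0 C0C ->].
  by rewrite mulmxr_lfunE -mulmxA -trmx_mul -DY DC.
case=> Y /mem_dual_codeP YC ->; rewrite mulmxr_lfunE submxMl; split => //.
apply/mem_dual_codeP => C0 C0C.
by rewrite trmx_mul mulmxA -[C0 *m B^T]mulmxr_lfunE YC // memv_img.
Qed.

Lemma lker_mulmxr_lfun_sub (S : {vspace 'M[F]_(m, n)}) :
  (lker g <= dual_code (f @: S))%VS.
Proof.
apply/subvP => Y; rewrite memv_ker mulmxr_lfunE => /eqP YB0.
apply/mem_dual_codeP => _ /memv_imgP[C0 _ ->].
by rewrite mulmxr_lfunE -mulmxA -trmx_mul YB0 trmx0 mulmx0 mxtrace0.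
Qed.

Lemma dim_dual_code_cap_rk_supp (C : {vspace 'M[F]_(m, n)}) :
  (\dim (dual_code C :&: rk_supp m <<B>>%MS) + \dim (lker g) + \dim (f @: C)
    = m * mu)%N.
Proof.
rewrite dual_code_cap_rk_supp -(dim_dual_code (f @: C)%VS).
rewrite -(limg_ker_dim g (dual_code (f @: C))).
by rewrite (capv_idPr (lker_mulmxr_lfun_sub _)) [(\dim (lker g) + _)%N]addnC.
Qed.

Lemma reldim_dual_code (C1 C2 : {vspace 'M[F]_(m, n)}) : (C2 <= C1)%VS ->
  reldim (dual_code C2) (dual_code C1) <<B>>%MS = (\dim (f @: C1) - \dim (f @: C2))%N.
Proof.
move=> C21; rewrite /reldim.
have := dim_dual_code_cap_rk_supp C1; have := dim_dual_code_cap_rk_supp C2.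
have := dimvS (limgS f C21); lia.
Qed.

End Reduction.

Section MutualInformation.
Variables (R : realType) (T A B : finType) (Omega : {set T}).
Variables (X : T -> A) (Y : T -> B).

Local Notation N_X a := #|[set w in Omega | X w == a]|.
Local Notation N_Y y := #|[set w in Omega | Y w == y]|.
Local Notation N_XY a y := #|[set w in Omega | (X w == a) && (Y w == y)]|.

Lemma sum_card_fibers (S : {set T}) (C : finType) (g : T -> C) :
  (\sum_(c : C) #|[set w in S | g w == c]| = #|S|)%N.
Proof.
rewrite -sum1_card (partition_big g predT) //=.
by apply: eq_bigr => c _; rewrite -sum1_card; apply: eq_bigl => w; rewrite !inE.
Qed.

Lemma sum_card_fibers2 : (\sum_a \sum_y N_XY a y = #|Omega|)%N.
Proof.
rewrite -[RHS](sum_card_fibers Omega X); apply: eq_bigr => a _.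
rewrite -(sum_card_fibers _ Y); apply: eq_bigr => y _.
by apply: eq_card => w; rewrite !inE andbA.
Qed.

(* Every nonzero term of the mutual information is p(a,y) log_k k^c. *)
Lemma mutinfo_const_ratio (k c : nat) : (1 < k)%N -> (0 < #|Omega|)%N ->
  (forall a y, N_XY a y != 0 -> N_XY a y * #|Omega| = k ^ c * (N_X a * N_Y y))%N ->
  mutinfo Omega X Y k%:R = c%:R :> R.
Proof.
move=> k1 Omega0 ratio; set N := #|Omega|.
have N0 : N%:R != 0 :> R by rewrite pnatr_eq0 -lt0n.
have lnk : ln k%:R != 0 :> R by rewrite gt_eqF // ln_gt0 // ltr1n.
transitivity (\sum_a \sum_y (N_XY a y)%:R / N%:R * c%:R : R); last first.
  under eq_bigr => a _ do rewrite -!mulr_suml -natr_sum.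
  by rewrite -!mulr_suml -natr_sum sum_card_fibers2 divff // mul1r.
apply: eq_bigr => a _; apply: eq_bigr => y _; rewrite /uprob /= -/N.
have [->|xy0] := eqVneq (N_XY a y) 0%N; first by rewrite !mul0r eqxx.
have := ratio a y xy0; set x := N_XY a y; set u := N_X a; set v := N_Y y => E.
have uv0 : (u * v)%:R != 0 :> R.
  have : (x * N)%N != 0%N by rewrite muln_eq0 negb_or xy0 -lt0n.
  by rewrite E muln_eq0 negb_or pnatr_eq0 => /andP[].
have -> : x%:R / N%:R / (u%:R / N%:R * (v%:R / N%:R)) = k%:R ^+ c :> R.
  apply: (mulIf uv0); rewrite -natrX -!natrM -E !natrM; field.
  by move: uv0; rewrite natrM mulf_eq0 negb_or => /andP[-> ->]; rewrite N0.
rewrite ifN; last by rewrite mulf_neq0 ?invr_eq0 // pnatr_eq0.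
congr (_ * _); rewrite lnXn ?ltr0n ?(ltn_trans _ k1) //.
by rewrite -[_ *+ c]mulr_natl mulfK.
Qed.

End MutualInformation.

Lemma card_lfun_fiber (F : finFieldType) p q p' q'
    (f : 'Hom('M[F]_(p, q), 'M[F]_(p', q'))) (V : {vspace 'M[F]_(p, q)}) v0 :
  v0 \in V -> #|[set v in V | f v == f v0]| = (#|F| ^ \dim (V :&: lker f))%N.
Proof.
move=> v0V; rewrite -card_vspace -[RHS](card_imset _ (addrI v0)); apply: eq_card => v.
rewrite !inE; apply/idP/imsetP => [/andP[vV /eqP fv]|[z + ->]].
  exists (v - v0); last by rewrite addrC subrK.
  by rewrite memv_cap rpredB // memv_ker linearB /= fv subrr.
by rewrite memv_cap memv_ker linearD /= => /andP[zV /eqP ->]; rewrite addr0 rpredD ?eqxx.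
Qed.

Lemma dim_cap_lker_limg (K : fieldType) (aT rT : vectType K) (f : 'Hom(aT, rT))
    (U V : {vspace aT}) : (U <= V)%VS ->
  (\dim (U :&: lker f) + \dim V =
    \dim (f @: V) - \dim (f @: U) + (\dim U + \dim (V :&: lker f)))%N.
Proof.
move=> UV; rewrite -(limg_ker_dim f V) -(limg_ker_dim f U).
have := dimvS (limgS f UV); lia.
Qed.

Section WiretapCounting.
Variables (F : finFieldType) (m n l : nat) (C1 C2 W : {vspace 'M[F]_(m, n)}).
Variable psi : {linear 'rV[F]_l -> 'M[F]_(m, n)}.
Hypothesis C2W : (C2 + W)%VS = C1.
Hypothesis C2W_direct : directv (C2 + W)%VS.
Hypothesis psi_inj : injective psi.
Hypothesis psiW : forall x, psi x \in W.
Hypothesis psi_onto : forall w, w \in W -> exists x, psi x = w.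

Local Notation Omega := (wt_space l C2).
Local Notation encode w := (psi w.1 + w.2).

Lemma encode_inj : {in Omega &, injective (fun w => encode w)}.
Proof.
move=> [x D] [x' D']; rewrite !inE /= => DC2 D'C2 E.
have dpsi : psi (x - x') = D' - D.
  by rewrite linearB /= -[psi x](addrK D) E [psi x' + D']addrC addrAC addrK.
have : psi (x - x') \in (C2 :&: W)%VS by rewrite memv_cap psiW dpsi rpredB.
rewrite (directv_addP C2W_direct) memv0 => /eqP psi0.
have -> : x = x' by apply/eqP; rewrite -subr_eq0 -(inj_eq psi_inj) psi0 linear0.
by move: dpsi; rewrite psi0 => /eqP; rewrite eq_sym subr_eq0 => /eqP ->.
Qed.

Lemma card_encode_preim (P : pred 'M[F]_(m, n)) :
  #|[set w in Omega | P (encode w)]| = #|[set C in C1 | P C]|.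
Proof.
rewrite -(card_in_imset (sub_in2 _ encode_inj)) => [|w]; last by rewrite inE => /andP[].
apply: eq_card => C; rewrite inE; apply/imsetP/andP => [[w] | [CC1 PC]].
  rewrite inE => /andP[wOmega Pw] ->; split => //; rewrite -C2W addrC memv_add ?psiW //.
  by move: wOmega; rewrite inE.
move: CC1 PC; rewrite -C2W => /memv_addP[D DC2 [_ /psi_onto[x <-] ->]] PC.
exists (x, D); last by rewrite addrC.
by rewrite !inE /= DC2 addrC.
Qed.

Lemma card_encode_preim_fst a (P : pred 'M[F]_(m, n)) :
  #|[set w in Omega | (w.1 == a) && P (encode w)]| = #|[set D in C2 | P (psi a + D)]|.
Proof.
rewrite -[RHS](card_imset _ (fun D D' (E : (a, D) = (a, D')) => congr1 snd E)).
apply: eq_card => -[x D]; rewrite !inE /=; apply/andP/imsetP => [[DC2 /andP[/eqP-> PD]]|].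
  by exists D; rewrite // inE DC2.
by case=> D' + [-> ->]; rewrite inE eqxx => /andP[-> ->].
Qed.

Variables (mu : nat) (B : 'M[F]_(mu, n)).
Local Notation f := (mulmxr_lfun m B^T).
Local Notation q := #|F|.

Lemma wt_info_dim_limg (R : realType) :
  wt_info R C2 psi B = (\dim (f @: C1) - \dim (f @: C2))%:R.
Proof.
have C21 : (C2 <= C1)%VS by rewrite -C2W addvSl.
have cardOmega : #|Omega| = (q ^ \dim C1)%N.
  transitivity #|[set w in Omega | predT (encode w)]|.
    by apply: eq_card => w; rewrite !inE andbT.
  by rewrite card_encode_preim -card_vspace; apply: eq_card => C; rewrite !inE andbT.
apply: mutinfo_const_ratio; first exact: card_finNzRing_gt1.
  by rewrite cardOmega expn_gt0 ltnW ?card_finNzRing_gt1.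
move=> a y; rewrite -lt0n => /card_gt0P[w0].
rewrite !inE => /andP[w0C2 /andP[/eqP w0a /eqP w0y]].
have N_X : #|[set w in Omega | w.1 == a]| = (q ^ \dim C2)%N.
  transitivity #|[set w in Omega | (w.1 == a) && predT (encode w)]|.
    by apply: eq_card => w; rewrite !inE andbT.
  by rewrite card_encode_preim_fst -card_vspace; apply: eq_card => D; rewrite !inE andbT.
have N_Y : #|[set w in Omega | (psi w.1 + w.2) *m B^T == y]| = (q ^ \dim (C1 :&: lker f))%N.
  have w0C1 : encode w0 \in C1 by rewrite -C2W addrC memv_add.
  rewrite -(card_lfun_fiber f w0C1) -(card_encode_preim (fun C => f C == f (encode w0))).
  by apply: eq_card => w; rewrite !inE !mulmxr_lfunE w0y.
have N_XY : #|[set w in Omega | (w.1 == a) && ((psi w.1 + w.2) *m B^T == y)]|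
    = (q ^ \dim (C2 :&: lker f))%N.
  rewrite -(card_lfun_fiber f w0C2).
  transitivity #|[set w in Omega | (w.1 == a) && (f (encode w) == y)]|.
    by apply: eq_card => w; rewrite !inE mulmxr_lfunE.
  rewrite (card_encode_preim_fst a (fun C => f C == y)); apply: eq_card => D.
  by rewrite !inE -w0y -w0a -mulmxr_lfunE !linearD /= (inj_eq (addrI _)).
by rewrite N_X N_Y N_XY cardOmega -!expnD dim_cap_lker_limg.
Qed.
End WiretapCounting.

Lemma exists_eqmx_nrows (F : fieldType) k n mu (A : 'M[F]_(k, n)) :
  (\rank A <= mu)%N -> exists B : 'M[F]_(mu, n), (B :=: A)%MS.
Proof.
move=> rAmu; exists (pid_mx (\rank A) *m row_base A).
apply/eqmxP/andP; split; first by rewrite mulmx_sub ?eq_row_base.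
set B := _ *m row_base A.
have rbB : row_base A = (pid_mx (\rank A) : 'M[F]_(\rank A, mu)) *m B.
  by rewrite mulmxA mul_pid_mx minnn (minn_idPr rAmu) pid_mx_1 mul1mx.
by rewrite -(eq_row_base A) rbB submxMl.
Qed.

Section RelativeParameters.
Variables (F : finFieldType) (m n : nat) (D1 D2 : {vspace 'M[F]_(m, n)}).
Hypothesis D21 : (D2 <= D1)%VS.

Lemma reldim_eqmx (A A' : 'M[F]_n) : (A :=: A')%MS -> reldim D1 D2 A = reldim D1 D2 A'.
Proof.
move=> eqA; rewrite /reldim; suff -> : rk_supp m A = rk_supp m A' by [].
by apply/vspaceP => V; rewrite !mem_rk_supp eqA.
Qed.

Lemma reldim_gt0P (A : 'M[F]_n) :
  reflect (exists2 C, C \in D1 /\ (C <= A)%MS & C \notin D2) (0 < reldim D1 D2 A)%N.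
Proof.
have sub : (D2 :&: rk_supp m A <= D1 :&: rk_supp m A)%VS by rewrite capvS.
rewrite /reldim subn_gt0 (ltn_leqif (dimv_leqif_eq sub)) eqEsubv sub /=.
apply: (iffP idP) => [/subvPn[C]|[C [CD1 CA] CD2]].
  by rewrite !memv_cap mem_rk_supp => /andP[CD1 CA]; rewrite CA andbT => CD2; exists C.
by apply/subvPn; exists C; rewrite !memv_cap mem_rk_supp ?CD1 ?CA // (negbTE CD2).
Qed.

Lemma reldim_full : reldim D1 D2 1%:M = (\dim D1 - \dim D2)%N.
Proof.
rewrite /reldim.
have -> : rk_supp m (1%:M : 'M[F]_n) = fullv.
  by apply/vspaceP => V; rewrite mem_rk_supp submx1 memvf.
by rewrite !capvf.
Qed.

Lemma exists_dMr_witness r : (r <= reldim D1 D2 1%:M)%N ->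
  exists B : 'M[F]_(dMr D1 D2 r, n), (r <= reldim D1 D2 <<B>>%MS)%N.
Proof.
move=> r_full; rewrite /dMr -minEnat.
have [A rA ->] := @eq_bigmin _ _ _ n _ (fun A => r <= reldim D1 D2 A)%N
  (fun A => \rank A) r_full (fun A _ => rank_leq_col A).
exists (row_base A).
by rewrite (reldim_eqmx (eqmx_trans (genmxE _) (eq_row_base A))).
Qed.

Lemma dMr_le r mu (B : 'M[F]_(mu, n)) :
  (r <= reldim D1 D2 <<B>>%MS)%N -> (dMr D1 D2 r <= mu)%N.
Proof.
move=> rB; rewrite /dMr -minEnat.
apply: leq_trans (bigmin_le_cond n (fun A => \rank A) rB) _.
by rewrite mxrank_gen rank_leq_row.
Qed.

Lemma exists_KMmu_witness mu : exists2 mu', (mu' <= mu)%N &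
  exists B : 'M[F]_(mu', n), reldim D1 D2 <<B>>%MS = KMmu D1 D2 mu.
Proof.
have rank0 : (\rank (0%R : 'M[F]_n) <= mu)%N by rewrite mxrank0.
rewrite /KMmu (bigop.bigmax_eq_arg _ rank0); case: arg_maxnP => // A rA _.
exists (\rank A) => //; exists (row_base A).
by apply: reldim_eqmx; exact: eqmx_trans (genmxE _) (eq_row_base A).
Qed.

Lemma reldim_le_KMmu mu mu' (B : 'M[F]_(mu', n)) :
  (mu' <= mu)%N -> (reldim D1 D2 <<B>>%MS <= KMmu D1 D2 mu)%N.
Proof.
by move=> mu'mu; apply: leq_bigmax_cond; rewrite mxrank_gen (leq_trans (rank_leq_row B)).
Qed.

Lemma mxrank_gt0_notin (C : 'M[F]_(m, n)) : C \notin D2 -> (0 < \rank C)%N.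
Proof. by move=> CD2; rewrite lt0n mxrank_eq0; apply: contraNneq CD2 => ->; exact: mem0v. Qed.

Lemma dR_le_rank C : C \in D1 -> C \notin D2 -> (dR D1 D2 <= \rank C)%N.
Proof.
move=> CD1 CD2; rewrite /dR -minEnat.
by apply: (@bigmin_le_cond _ _ _ n C (fun C => (C \in D1) && (C \notin D2))); rewrite CD1.
Qed.

Lemma reldim_eq0 (A : 'M[F]_n) : (\rank A <= (dR D1 D2).-1)%N -> reldim D1 D2 A = 0%N.
Proof.
move=> rA; apply/eqP; rewrite -leqn0 leqNgt; apply/reldim_gt0P => -[C [CD1 CA] CD2].
have := mxrankS CA; have := dR_le_rank CD1 CD2; have := mxrank_gt0_notin CD2; lia.
Qed.

Lemma dR_le_of_reldim_eq0 mu : ~~ (D1 <= D2)%VS ->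
  (forall B : 'M[F]_(mu, n), reldim D1 D2 <<B>>%MS = 0%N) -> (mu <= (dR D1 D2).-1)%N.
Proof.
case/subvPn=> C0 C0D1 C0D2 reldim0.
have C0D : (C0 \in D1) && (C0 \notin D2) by rewrite C0D1.
rewrite /dR -minEnat.
have [C /andP[CD1 CD2] ->] := @eq_bigmin _ _ _ n _
  (fun C => (C \in D1) && (C \notin D2)) (fun C => \rank C) C0D
  (fun C _ => rank_leq_col C).
rewrite leqNgt; apply/negP => rC_mu.
have [B BC] : exists B : 'M[F]_(mu, n), (B :=: C)%MS.
  by apply: exists_eqmx_nrows; have := mxrank_gt0_notin CD2; lia.
suff : (0 < reldim D1 D2 <<B>>%MS)%N by rewrite reldim0.
by apply/reldim_gt0P; exists C; rewrite // genmxE BC.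
Qed.

End RelativeParameters.

Theorem theorem1 (R : realType) (F : finFieldType) (m n : nat)
  (C1 C2 W : {vspace 'M[F]_(m, n)}) (l : nat)
  (psi : {linear 'rV[F]_l -> 'M[F]_(m, n)}) :
  (0 < m)%N -> (0 < n)%N ->
  (C2 <= C1)%VS -> C2 != C1 ->
  l = (\dim C1 - \dim C2)%N ->
  (C2 + W)%VS = C1 -> directv (C2 + W)%VS ->
  injective psi ->
  (forall x, psi x \in W) ->
  (forall w, w \in W -> exists x, psi x = w) ->
  let I := fun (mu : nat) (B : 'M[F]_(mu, n)) => wt_info R C2 psi B in
  let D1 := dual_code C2 in
  let D2 := dual_code C1 in
  (* (1) *)
  (forall r : nat, (1 <= r <= l)%N ->
     (exists B : 'M[F]_(dMr D1 D2 r, n), r%:R <= I _ B) /\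
     (forall (mu : nat) (B : 'M[F]_(mu, n)), r%:R <= I _ B ->
        (dMr D1 D2 r <= mu)%N)) /\
  (* (2) *)
  (forall mu : nat, (mu <= n)%N ->
     (exists mu' : nat, (mu' <= mu)%N /\
        exists B : 'M[F]_(mu', n), I _ B = (KMmu D1 D2 mu)%:R) /\
     (forall (mu' : nat) (B : 'M[F]_(mu', n)), (mu' <= mu)%N ->
        I _ B <= (KMmu D1 D2 mu)%:R)) /\
  (* (3) *)
  ((forall B : 'M[F]_((dR D1 D2).-1, n), I _ B = 0) /\
   (forall mu : nat, (forall B : 'M[F]_(mu, n), I _ B = 0) ->
      (mu <= (dR D1 D2).-1)%N)).
Proof.
move=> _ _ C21 C21neq l_dim C2W C2W_direct psi_inj psiW psi_onto I D1 D2.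
have I_reldim mu (B : 'M[F]_(mu, n)) : I mu B = (reldim D1 D2 <<B>>%MS)%:R.
  by rewrite /I (wt_info_dim_limg C2W) // reldim_dual_code.
have D21 : (D2 <= D1)%VS by exact: dual_codeS.
have reldim_full_l : reldim D1 D2 1%:M = l.
  by rewrite reldim_full dim_dual_codeB l_dim.
have D1_notsub : ~~ (D1 <= D2)%VS.
  have dimD21 : (\dim D2 < \dim D1)%N.
    by rewrite -subn_gt0 dim_dual_codeB subn_gt0 (ltn_leqif (dimv_leqif_eq C21)).
  by apply/negP => /dimvS; rewrite leqNgt dimD21.
split; [|split; [|split]].
- move=> r /andP[_]; rewrite -reldim_full_l => r_full; split.
    have [B rB] := exists_dMr_witness r_full.
    by exists B; rewrite I_reldim ler_nat.
  by move=> mu B; rewrite I_reldim ler_nat; exact: dMr_le.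
- move=> mu _; split.
    have [mu' mu'mu [B KB]] := exists_KMmu_witness D1 D2 mu.
    by exists mu'; split => //; exists B; rewrite I_reldim KB.
  by move=> mu' B mu'mu; rewrite I_reldim ler_nat reldim_le_KMmu.
- by move=> B; rewrite I_reldim reldim_eq0 // mxrank_gen rank_leq_row.
move=> mu I0; apply: (dR_le_of_reldim_eq0 D21 D1_notsub) => B.
by apply/eqP; rewrite -(eqr_nat R) -I_reldim I0.
Qed.
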